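(* Consider an asynchronous execution of the Arrow protocol for a request set $R$ on a tree $T$, with requests indexed $r_0,r_1,\dots,r_{|R|-1}$ in the resulting queueing order. Let $i\in[1,|R|-1]$ and let $(u_0,u_1,\dots,u_s)$ be the tree path from $u_0=v_i$ (node of $r_i$) to $u_s=v_{i-1}$ (node of its predecessor $r_{i-1}$). Then for every node $u_k$ on this path, among the ''find predecessor'' messages of all requests $r_j$ with $j\in[i,|R|-1]$, the message of $r_i$ is the first one that reaches node $u_k$ (or is generated at $u_k$).
   Context: Requests $r=(v,t)$ are issued at node $v$ at time $t\ge0$; $r_0=(v_0,0)$ is a dummy request. Arrow protocol on a weighted tree $T$: each node $u$ stores a pointer $\mathrm{link}(u)$ (itself or a neighbour), initially pointing towards $v_0$ with $\mathrm{link}(v_0)=v_0$. When $r$ is issued at $v$: if $\mathrm{link}(v)=v$, $r$ is queued behind the previous request at $v$; otherwise atomically the ''find predecessor'' message $\mathrm{find}(r)$ is sent to $\mathrm{link}(v)$ and $\mathrm{link}(v):=v$. When $u$ receives $\mathrm{find}(r)$ from neighbour $w$: if $\mathrm{link}(u)=u$, atomically $r$ is queued directly behind the last request issued at $u$ and $\mathrm{link}(u):=w$; otherwise atomically $\mathrm{find}(r)$ is forwarded to $\mathrm{link}(u)$ and $\mathrm{link}(u):=w$. In an asynchronous execution message delays are arbitrary, each delay over edge $e$ being at most the weight of $e$. *)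

From mathcomp Require Import all_boot all_order all_algebra.
Set Implicit Arguments. Unset Strict Implicit. Unset Printing Implicit Defensive.
Import Order.TTheory GRing.Theory Num.Theory.
Local Open Scope ring_scope.

Definition is_tree (V : finType) (adj : rel V) : Prop :=
  [/\ symmetric adj,
      irreflexive adj,
      (forall x y : V, exists p, path adj x p /\ last x p = y) &
      (forall (x : V) (p q : seq V), path adj x p -> path adj x q ->
          uniq (x :: p) -> uniq (x :: q) -> last x p = last x q -> p = q)].

Definition init_links (V : finType) (adj : rel V) (v0 : V) (link0 : V -> V) : Prop :=
  link0 v0 = v0 /\
  forall u, u != v0 -> adj u (link0 u) /\
    exists p, [/\ path adj (link0 u) p, last (link0 u) p = v0 & uniq (u :: link0 u :: p)].

(* Atomic events: the issuing of request a, or the delivery of the (unique,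
   currently in transit) find(a) message. *)
Inductive event (I : Type) := Issue of I | Deliver of I.

Record state (V I R : Type) := State {
  lnk : V -> V;
  lastreq : V -> I;                  (* last request issued at u (r0 at start) *)
  transit : I -> option (V * V * R); (* find(a) in transit: (sender, receiver, send time) *)
  predq : I -> option I              (* request behind which a has been queued *)
}.

Definition upd (V : eqType) (T : Type) (f : V -> T) (v : V) (x : T) : V -> T :=
  fun y => if y == v then x else f y.

Definition init_state (V I R : Type) (link0 : V -> V) (d : I) : state V I R :=
  State link0 (fun _ => d) (fun _ => None) (fun _ => None).

Definition step (V I : eqType) (R : Type) (rv : I -> V) (t : R)
    (s : state V I R) (e : event I) : state V I R :=
  match e with
  | Issue a =>
      let v := rv a in
      if lnk s v == v then
        State (lnk s) (upd (lastreq s) v a) (transit s)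
              (upd (predq s) a (Some (lastreq s v)))
      else
        State (upd (lnk s) v v) (upd (lastreq s) v a)
              (upd (transit s) a (Some (v, lnk s v, t))) (predq s)
  | Deliver a =>
      match transit s a with
      | None => s
      | Some (w, u, _) =>
          let tr := upd (transit s) a None in
          if lnk s u == u then
            State (upd (lnk s) u w) (lastreq s) tr
                  (upd (predq s) a (Some (lastreq s u)))
          else
            State (upd (lnk s) u w) (lastreq s)
                  (upd tr a (Some (u, lnk s u, t))) (predq s)
      end
  end.

Definition event_ok (V I : eqType) (R : numDomainType) (d : I) (rt : I -> R)
    (wt : V -> V -> R) (s : state V I R) (t : R) (e : event I) : Prop :=
  match e with
  | Issue a => a != d /\ t = rt a
  | Deliver a => exists w u ts, transit s a = Some (w, u, ts) /\ ts <= t <= ts + wt w u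
  end.

Fixpoint run_ok (V I : eqType) (R : numDomainType) (d : I) (rv : I -> V)
    (rt : I -> R) (wt : V -> V -> R) (s : state V I R) (t0 : R)
    (es : seq (R * event I)) : Prop :=
  match es with
  | [::] => forall a, transit s a = None
  | (t, e) :: es' =>
      [/\ t0 <= t, event_ok d rt wt s t e & run_ok d rv rt wt (step rv t s e) t es']
  end.

Definition state_after (V I : eqType) (R : Type) (rv : I -> V) (s0 : state V I R)
    (es : seq (R * event I)) : state V I R :=
  foldl (fun s te => step rv te.1 s te.2) s0 es.

Definition is_issue_of (I : eqType) (a : I) (e : event I) : bool :=
  if e is Issue b then b == a else false.

(* An asynchronous execution of Arrow for the request set I (dummy d),
   starting at time 0 from the initial configuration: every non-dummy
   request is issued exactly once. *)
Definition arrow_execution (V I : finType) (R : numDomainType) (d : I) (rv : I -> V)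
    (rt : I -> R) (wt : V -> V -> R) (link0 : V -> V) (es : seq (R * event I)) : Prop :=
  run_ok d rv rt wt (init_state R link0 d) 0 es /\
  forall a, a != d -> count (fun te => is_issue_of a te.2) es = 1%N.

(* Request a's find message reaches node u (or is generated / a is issued at u)
   at step k of the execution. *)
Definition visits (V I : finType) (R : Type) (rv : I -> V) (link0 : V -> V) (d : I)
    (es : seq (R * event I)) (a : I) (u : V) (k : nat) : Prop :=
  (k < size es)%N /\
  match ohead (drop k es) with
  | None => False
  | Some (_, Issue b) => b = a /\ rv a = u
  | Some (_, Deliver b) => b = a /\
      exists w ts, transit (state_after rv (init_state R link0 d) (take k es)) a
                   = Some (w, u, ts)
  end.

Definition queued_after (I : Type) (pr : I -> option I) (c a : I) : Prop :=
  exists n, iter n (fun o => obind pr o) (Some c) = Some a.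

(* Besides the real queue (predq) we follow a virtual one, queue_succ: a request
   whose find message is travelling towards u already counts as queued behind
   queue_tail u, the last request issued at the sink that u reaches along the
   links.  Every atomic event keeps the virtual successor relation acyclic and
   only lengthens its chains: an issue inserts a fresh request, a delivery at u
   redirects the messages heading into u.  Moreover the last request whose
   message visited a node v is always virtually queued at or before
   queue_tail v.  Hence, if c visits u before a does, then a is queued after c
   in the final queue, where virtual and real queues agree; if c is also queued
   after a, acyclicity gives c = a.  Finally, the find message of a walks from
   rv a to the node of its predecessor, so by uniqueness of tree paths it visits
   every node of the path between them. *)

From mathcomp Require Import all_boot all_order all_algebra.

Set Implicit Arguments. Unset Strict Implicit. Unset Printing Implicit Defensive.

Lemma upd_at (T : eqType) (U : Type) (f : T -> U) x y : upd f x y x = y.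
Proof. by rewrite /upd eqxx. Qed.

Lemma upd_ne (T : eqType) (U : Type) (f : T -> U) x y z : z != x -> upd f x y z = f z.
Proof. by rewrite /upd => /negbTE ->. Qed.

Section QueueChains.
Variable I : eqType.
Implicit Types (f g : I -> option I) (x y z : I).

Local Notation chain f n x := (iter n (fun o => obind f o) (Some x)).

Definition chain_acyclic f := forall x n, chain f n.+1 x <> Some x.

Lemma chain_None f n : iter n (fun o => obind f o) None = None.
Proof. by elim: n => //= n ->. Qed.

Lemma chain_succ f n x y : f x = Some y -> chain f n.+1 x = chain f n y.
Proof. by move=> fx; rewrite iterSr /= fx. Qed.

Lemma queued_after_refl f x : queued_after f x x.
Proof. by exists 0. Qed.

Lemma queued_after1 f x y : f x = Some y -> queued_after f x y.
Proof. by exists 1. Qed.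

Lemma queued_after_trans f x y z :
  queued_after f x y -> queued_after f y z -> queued_after f x z.
Proof. by case=> n xy [m yz]; exists (m + n); rewrite iterD xy. Qed.

Lemma queued_after_step f x y z :
  f x = Some y -> queued_after f y z -> queued_after f x z.
Proof. by move/queued_after1; apply: queued_after_trans. Qed.

Lemma queued_after_total f x y1 y2 : queued_after f x y1 -> queued_after f x y2 ->
  queued_after f y1 y2 \/ queued_after f y2 y1.
Proof.
case=> n1 h1 [n2 h2]; case: (leqP n1 n2) => [le12|/ltnW le21].
- by left; exists (n2 - n1); rewrite -h1 -iterD subnK.
- by right; exists (n1 - n2); rewrite -h2 -iterD subnK.
Qed.

Lemma queued_after_sub f g x y : (forall z t, f z = Some t -> queued_after g z t) ->
  queued_after f x y -> queued_after g x y.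
Proof.
move=> fg [n]; elim: n y => [|n IHn] y /=; first by case=> <-; apply: queued_after_refl.
case E: (chain f n x) => [z|] //= fz.
exact: queued_after_trans (IHn z E) (fg _ _ fz).
Qed.

Section Acyclic.
Variable f : I -> option I.
Hypothesis acf : chain_acyclic f.

Lemma acyclic_succ_not_queued x y : f y = Some x -> ~ queued_after f x y.
Proof. by move=> fy [n xy]; apply: (@acf x n); rewrite iterS xy /= fy. Qed.

Lemma acyclic_antisym x y : queued_after f x y -> queued_after f y x -> x = y.
Proof.
case=> [[|n] xy] [m yx]; first by case: xy.
by case: (@acf y (n + m)); rewrite -addSn iterD yx.
Qed.

Lemma acyclic_succ_inj x y t : f x = Some t -> f y = Some t ->
  queued_after f x y -> x = y.
Proof.
move=> fx fy [[|n] xy]; first by case: xy.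
by case: (@acf t n); rewrite iterS -(chain_succ _ fx) xy /= fy.
Qed.

Lemma acyclic_queued_succ_inj x y1 y2 t : f y1 = Some t -> f y2 = Some t ->
  queued_after f x y1 -> queued_after f x y2 -> y1 = y2.
Proof.
move=> fy1 fy2 xy1 xy2; case: (queued_after_total xy1 xy2) => y12.
- exact: acyclic_succ_inj fy1 fy2 y12.
- exact/esym/(acyclic_succ_inj fy2 fy1 y12).
Qed.

End Acyclic.

Section ChangeOn.
Variables (f g : I -> option I) (D : pred I).
Hypothesis gf_out : forall z, ~~ D z -> g z = f z.

Lemma chain_eq_avoiding t : (forall z, D z -> ~ queued_after f t z) ->
  forall n, chain g n t = chain f n t.
Proof.
move=> tD; elim=> [|n IHn] //=; rewrite IHn.
case E: (chain f n t) => [z|] //=; apply: gf_out; apply/negP => Dz.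
by apply: (tD z Dz); exists n.
Qed.

Lemma queued_after_eq_avoiding t y : (forall z, D z -> ~ queued_after f t z) ->
  queued_after f t y -> queued_after g t y.
Proof. by move=> tD [n ty]; exists n; rewrite chain_eq_avoiding. Qed.

Lemma chain_eq_or_hit x n : chain g n x = chain f n x \/
  exists j z, chain g j x = Some z /\ D z.
Proof.
elim: n => [|n [IHn|]] /=; [by left | | by right].
rewrite IHn; case E: (chain f n x) => [z|] /=; last by left.
have [Dz|nDz] := boolP (D z); last by left; rewrite gf_out.
by right; exists n, z; rewrite IHn E.
Qed.

(* A g-cycle avoiding D would be an f-cycle; one through z in D is reached
   from t along g, whereas the g-chain of t is its f-chain, which avoids D. *)
Lemma acyclic_change t : chain_acyclic f -> (forall z, D z -> ~ queued_after f t z) ->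
  (forall z n, D z -> chain g n.+1 z = Some z -> queued_after g t z) -> chain_acyclic g.
Proof.
move=> acf tD cycD x n cyc.
have [fcyc|[j [z [xz Dz]]]] := chain_eq_or_hit x n.+1; first by apply: (acf x n); rewrite -fcyc.
have zcyc : chain g n.+1 z = Some z by rewrite -xz -iterD addnC iterD cyc.
have [m tz] := cycD z n Dz zcyc.
by apply: (tD z Dz); exists m; rewrite -chain_eq_avoiding.
Qed.

End ChangeOn.

Lemma not_queued_after_fresh f x a :
  (forall y, f y <> Some a) -> x != a -> ~ queued_after f x a.
Proof.
move=> fa xa [[|n]] /=; first by case=> /eqP; rewrite (negbTE xa).
by case: (chain f n x) => //= y /fa.
Qed.

(* Enqueueing a fresh request a behind t0, with the requests of M now behind a. *)
Lemma acyclic_insert f g a t0 (M : pred I) : chain_acyclic f ->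
  f a = None -> (forall y, f y <> Some a) -> t0 != a -> g a = Some t0 ->
  (forall z, M z -> [/\ z != a, f z = Some t0 & g z = Some a]) ->
  (forall z, z != a -> ~~ M z -> g z = f z) ->
  chain_acyclic g /\ (forall x y, queued_after f x y -> queued_after g x y).
Proof.
move=> acf fa fresh t0a ga Mz gf.
pose D := [pred z | (z == a) || M z].
have gf_out z : ~~ D z -> g z = f z by rewrite negb_or => /andP[za nMz]; apply: gf.
split.
- apply: (acyclic_change gf_out (t := t0) acf).
  + move=> z /orP[/eqP->|/Mz[_ fz _]]; first exact: not_queued_after_fresh.
    exact: acyclic_succ_not_queued fz.
  + move=> z n /orP[/eqP->|/Mz[za _ gz]] zcyc.
      by exists n; rewrite -(chain_succ _ ga).
    rewrite (chain_succ _ gz) in zcyc; case: n zcyc => [[/eqP]|n zcyc].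
      by rewrite eq_sym (negbTE za).
    by exists n; rewrite -(chain_succ _ ga).
- move=> x y; apply: queued_after_sub => z t fz; have [/Mz[_ fz' gz]|nMz] := boolP (M z).
    by move: fz; rewrite fz' => -[<-]; apply: queued_after_step gz (queued_after1 ga).
  have za : z != a by apply/eqP => za; move: fz; rewrite za fa.
  by apply: queued_after1; rewrite gf.
Qed.

(* Moving the requests of M from behind t1 to behind t, where t is queued
   after r and r is directly behind t1. *)
Lemma acyclic_redirect f g r t1 t (M : pred I) : chain_acyclic f ->
  f r = Some t1 -> g r = Some t1 -> queued_after f t r ->
  (forall z, M z -> [/\ z != r, f z = Some t1 & g z = Some t]) ->
  (forall z, z != r -> ~~ M z -> g z = f z) ->
  [/\ chain_acyclic g, (forall x y, queued_after f x y -> queued_after g x y)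
    & queued_after g t r].
Proof.
move=> acf fr gr tr Mz gf.
have gf_out z : ~~ M z -> g z = f z.
  by have [->|zr] := eqVneq z r; [rewrite fr gr | apply: gf].
have tM z : M z -> ~ queued_after f t z.
  move=> /Mz[zr fz _] tz; move/eqP: zr; apply.
  exact: (acyclic_queued_succ_inj acf fz fr tz tr).
have gtr : queued_after g t r := queued_after_eq_avoiding gf_out tM tr.
split => //.
- apply: (acyclic_change gf_out acf tM) => z n /Mz[_ _ gz] zcyc.
  by rewrite (chain_succ _ gz) in zcyc; exists n.
- move=> x y; apply: queued_after_sub => z t' fz; have [/Mz[_ fz' gz]|nMz] := boolP (M z).
    move: fz; rewrite fz' => -[<-].
    exact: queued_after_step gz (queued_after_trans gtr (queued_after1 gr)).
  by apply: queued_after1; rewrite gf_out.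
Qed.

End QueueChains.

Section Sinks.
Variable V : finType.
Implicit Types (L : V -> V) (v x y z : V).

Definition sink L v := iter #|V| L v.

Definition terminating L := forall v, exists2 z, fconnect L v z & L z = z.

Lemma sink_eq L v z : fconnect L v z -> L z = z -> sink L v = z.
Proof.
move=> vz Lz; have le_iV : findex L v z <= #|V|.
  exact: ltnW (leq_trans (findex_max vz) (max_card _)).
by rewrite /sink -(subnK le_iV) iterD iter_findex // iter_fix.
Qed.

Lemma sink_id L z : L z = z -> sink L z = z.
Proof. exact: sink_eq (connect0 _ z). Qed.

Lemma fconnect_sink L v : fconnect L v (sink L v).
Proof. exact: fconnect_iter. Qed.

Lemma sink_neq L v x : ~~ fconnect L v x -> sink L v != x.
Proof. by apply: contraNneq => <-; apply: fconnect_sink. Qed.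

Lemma iter_upd_out L x y v n : ~~ fconnect L v x -> iter n (upd L x y) v = iter n L v.
Proof.
move=> vx; elim: n => //= n ->; rewrite /upd ifF //.
by apply: contraNF vx => /eqP <-; apply: fconnect_iter.
Qed.

Lemma sink_upd_out L x y v : ~~ fconnect L v x -> sink (upd L x y) v = sink L v.
Proof. exact: iter_upd_out. Qed.

Lemma iter_upd_findex L x y v : fconnect L v x -> iter (findex L v x) (upd L x y) v = x.
Proof.
move=> vx; suff same_prefix j : j <= findex L v x -> iter j (upd L x y) v = iter j L v.
  by rewrite same_prefix ?iter_findex.
elim: j => [|j IHj] lt_j //=; rewrite IHj ?(ltnW lt_j) // /upd ifF //.
have lt_jo : j < order L v := ltn_trans lt_j (findex_max vx).
by apply/negbTE/eqP => jx; move: lt_j; rewrite -jx findex_iter ?ltnn.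
Qed.

Lemma fconnect_upd_in L x y v : fconnect L v x -> fconnect (upd L x y) v x.
Proof. by move=> vx; rewrite -{2}(iter_upd_findex y vx); apply: fconnect_iter. Qed.

Lemma sink_upd_self L x v : fconnect L v x -> sink (upd L x x) v = x.
Proof. by move/(fconnect_upd_in x)/sink_eq; apply; rewrite upd_at. Qed.

Lemma eq_sink L L' : L =1 L' -> sink L =1 sink L'.
Proof. by move=> eL v; apply: eq_iter. Qed.

Lemma eq_terminating L L' : L =1 L' -> terminating L -> terminating L'.
Proof.
move=> eL termL v; have [z vz Lz] := termL v.
by exists z; rewrite -?(eq_fconnect eL) -?eL.
Qed.

Section Terminating.
Variable L : V -> V.
Hypothesis termL : terminating L.

Lemma sink_fixed v : L (sink L v) = sink L v.
Proof. by have [z vz Lz] := termL v; rewrite (sink_eq vz Lz). Qed.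

Lemma sink_fconnect v x : fconnect L v x -> sink L v = sink L x.
Proof.
move=> vx; apply: sink_eq (sink_fixed x).
exact: connect_trans vx (fconnect_sink L x).
Qed.

(* A cycle through x would make x equal to the fixed point it reaches. *)
Lemma fconnect_succ_no_return x : L x != x -> ~~ fconnect L (L x) x.
Proof.
move=> Lx; apply/negP => /iter_findex; rewrite -iterSr; set k := findex _ _ _ => cyc.
have [z /iter_findex xz Lz] := termL x; set j := findex _ x z in xz.
have : iter (j * k.+1) L x = x by rewrite iterM iter_fix.
by rewrite mulnS addnC iterD xz iter_fix // => zx; move: Lx; rewrite -zx Lz eqxx.
Qed.

Lemma sink_upd_in x y v : ~~ fconnect L y x -> fconnect L v x ->
  sink (upd L x y) v = sink L y.
Proof.
move=> yx vx; apply: sink_eq; last by rewrite upd_ne ?sink_fixed // sink_neq.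
apply: connect_trans (fconnect_upd_in y vx) _.
apply: connect_trans (fconnect1 _ x) _; rewrite upd_at.
by rewrite -(sink_upd_out y yx); apply: fconnect_sink.
Qed.

Lemma terminating_upd x y : x = y \/ ~~ fconnect L y x -> terminating (upd L x y).
Proof.
move=> xy v; have [vx|vx] := boolP (fconnect L v x); last first.
  exists (sink L v); first by rewrite -(sink_upd_out y vx); apply: fconnect_sink.
  by rewrite upd_ne ?sink_fixed // sink_neq.
case: xy => [<-|yx]; first by exists x; [apply: fconnect_upd_in | rewrite upd_at].
exists (sink L y); last by rewrite upd_ne ?sink_fixed // sink_neq.
by rewrite -(sink_upd_in yx vx); apply: fconnect_sink.
Qed.

End Terminating.
End Sinks.

Local Arguments step : simpl never.

Section ArrowStep.
Variables (V : finType) (I : eqType) (R : Type) (adj : rel V) (rv : I -> V).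
Local Notation state := (state V I R).
Implicit Types (s : state) (g : V -> I) (issued : pred I).

Definition queue_tail s v := lastreq s (sink (lnk s) v).

Definition queue_succ s r : option I :=
  if transit s r is Some (_, u, _) then Some (queue_tail s u) else predq s r.

Definition heads_to s v r : bool :=
  if transit s r is Some (_, u, _) then fconnect (lnk s) u v else false.

Definition last_visitor_step s g (e : event I) : V -> I :=
  match e with
  | Issue a => upd g (rv a) a
  | Deliver a => if transit s a is Some (_, u, _) then upd g u a else g
  end.

Record arrow_inv s g issued : Prop := ArrowInv {
  inv_terminating : terminating (lnk s);
  inv_link_adj : forall v, lnk s v != v -> adj v (lnk s v);
  inv_transit_adj : forall r w u ts, transit s r = Some (w, u, ts) -> adj w u;
  inv_unissued : forall r, ~~ issued r ->
    [/\ transit s r = None, predq s r = None,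
        forall z, predq s z <> Some r & forall v, lastreq s v <> r];
  inv_sink_lastreq : forall z, lnk s z = z -> rv (lastreq s z) = z;
  inv_transit_queued : forall r w u ts, transit s r = Some (w, u, ts) ->
    queued_after (queue_succ s) (queue_tail s w) r;
  inv_last_visitor_queued : forall v, queued_after (queue_succ s) (queue_tail s v) (g v);
  inv_acyclic : chain_acyclic (queue_succ s) }.

Definition step_ok s g s' g' issued' :=
  [/\ arrow_inv s' g' issued',
      forall x y, queued_after (queue_succ s) x y -> queued_after (queue_succ s') x y
    & forall v, queued_after (queue_succ s') (g' v) (g v)].

Lemma arrow_inv_eq_issued s g issued issued' :
  issued =1 issued' -> arrow_inv s g issued -> arrow_inv s g issued'.
Proof. by move=> e [] *; split=> // r; rewrite -e; auto. Qed.

Lemma heads_to_succ s v z : terminating (lnk s) -> heads_to s v z ->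
  queue_succ s z = Some (queue_tail s v).
Proof.
rewrite /heads_to /queue_succ /queue_tail => termL.
by case: (transit s z) => [[[w u] ts] uv|] //; rewrite (sink_fconnect termL uv).
Qed.

Lemma queue_inv_step s s' g a x :
  (forall r w u ts, transit s' r = Some (w, u, ts) ->
     r = a /\ w = x \/ transit s r = Some (w, u, ts)) ->
  (forall r w u ts, transit s r = Some (w, u, ts) ->
     queued_after (queue_succ s) (queue_tail s w) r) ->
  (forall v, queued_after (queue_succ s) (queue_tail s v) (g v)) ->
  (forall p q, queued_after (queue_succ s) p q -> queued_after (queue_succ s') p q) ->
  (forall y, queued_after (queue_succ s') (queue_tail s' y) (queue_tail s y)) ->
  queued_after (queue_succ s') (queue_tail s' x) a ->
  queue_succ s' a = Some (queue_tail s x) ->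
  [/\ forall r w u ts, transit s' r = Some (w, u, ts) ->
        queued_after (queue_succ s') (queue_tail s' w) r,
      forall v, queued_after (queue_succ s') (queue_tail s' v) (upd g x a v)
    & forall v, queued_after (queue_succ s') (upd g x a v) (g v)].
Proof.
move=> transit' queued visitors mono tails xa succ_a; split.
- move=> r w u ts /transit'[[-> ->] //|tr].
  exact: queued_after_trans (tails w) (mono _ _ (queued _ _ _ _ tr)).
- move=> v; have [->|vx] := eqVneq v x; first by rewrite upd_at.
  by rewrite upd_ne //; apply: queued_after_trans (tails v) (mono _ _ (visitors v)).
- move=> v; have [->|vx] := eqVneq v x; last by rewrite upd_ne //; apply: queued_after_refl.
  by rewrite upd_at; apply: queued_after_step succ_a (mono _ _ (visitors x)).
Qed.

Section Issue.
Variables (s : state) (g : V -> I) (issued : pred I) (t : R) (a : I).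
Hypotheses (invs : arrow_inv s g issued) (fresh : ~~ issued a).
Local Notation v := (rv a).
Local Notation L := (lnk s).
Local Notation s' := (step rv t s (Issue a)).

Lemma issue_lastreq : lastreq s' = upd (lastreq s) v a.
Proof. by rewrite /step; case: ifP. Qed.

Lemma issue_lnk : lnk s' =1 upd L v v.
Proof. by rewrite /step; case: ifP => [/eqP Lv|_] y //=; rewrite /upd; case: eqP => // ->. Qed.

Lemma issue_transit r :
  transit s' r = if (r == a) && (L v != v) then Some (v, L v, t) else transit s r.
Proof. by rewrite /step /upd; case: ifP => _ /=; rewrite ?andbF ?andbT. Qed.

Lemma issue_predq r :
  predq s' r = if (r == a) && (L v == v) then Some (lastreq s v) else predq s r.
Proof. by rewrite /step /upd; case: ifP => _ /=; rewrite ?andbF ?andbT. Qed.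

Lemma issue_tail y : queue_tail s' y = if fconnect L y v then a else queue_tail s y.
Proof.
rewrite /queue_tail issue_lastreq (eq_sink issue_lnk).
case: ifP => yv; first by rewrite sink_upd_self ?upd_at.
by rewrite sink_upd_out ?yv // upd_ne // sink_neq ?yv.
Qed.

Lemma issue_succ z : queue_succ s' z =
  if z == a then Some (queue_tail s v)
  else if heads_to s v z then Some a else queue_succ s z.
Proof.
have termL := inv_terminating invs; have [tra _ _ _] := inv_unissued invs fresh.
rewrite /queue_succ issue_transit issue_predq /heads_to.
have [->|za] := eqVneq z a; last first.
  by case: (transit s z) => [[[w u] ts]|] //=; rewrite issue_tail; case: ifP.
rewrite tra /=; case: eqP => [Lv|/eqP Lv] /=; first by rewrite /queue_tail (sink_id Lv).
rewrite issue_tail ifN; last exact: fconnect_succ_no_return.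
by rewrite /queue_tail (sink_fconnect termL (fconnect1 _ v)).
Qed.

Lemma issue_queue : chain_acyclic (queue_succ s') /\
  forall x y, queued_after (queue_succ s) x y -> queued_after (queue_succ s') x y.
Proof.
have [tra pqa not_pred not_last] := inv_unissued invs fresh.
apply: (acyclic_insert (a := a) (t0 := queue_tail s v) (inv_acyclic invs)
          (M := [pred z | (z != a) && heads_to s v z])).
- by rewrite /queue_succ tra.
- move=> y; rewrite /queue_succ.
  by case: (transit s y) => [[[w u] ts] [/not_last]|]; last exact: not_pred.
- by apply/eqP => /not_last.
- by rewrite issue_succ eqxx.
- move=> z /andP[za hz]; rewrite issue_succ (negbTE za) hz; split=> //.
  exact: heads_to_succ (inv_terminating invs) hz.
- move=> z za; rewrite /= za /= => /negbTE hz.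
  by rewrite issue_succ (negbTE za) hz.
Qed.

Lemma issue_step_ok :
  step_ok s g s' (last_visitor_step s g (Issue a)) [pred r | issued r || (r == a)].
Proof.
have [termL link_adj transit_adj unissued sink_last queued visitors _] := invs.
have [acyc' mono] := issue_queue.
have succ_a : queue_succ s' a = Some (queue_tail s v) by rewrite issue_succ eqxx.
have tails y : queued_after (queue_succ s') (queue_tail s' y) (queue_tail s y).
  rewrite issue_tail; case: ifP => yv; last exact: queued_after_refl.
  by apply: queued_after1; rewrite succ_a /queue_tail (sink_fconnect termL yv).
have transit' r w u ts : transit s' r = Some (w, u, ts) ->
    r = a /\ w = v \/ transit s r = Some (w, u, ts).
  by rewrite issue_transit; case: ifP => [/andP[/eqP -> _] [<- _ _]|_]; [left | right].
have tail_a : queued_after (queue_succ s') (queue_tail s' v) a.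
  by rewrite issue_tail connect0; apply: queued_after_refl.
have [queued' visitors' visitors_mono] :=
  queue_inv_step transit' queued visitors mono tails tail_a succ_a.
split=> //; split=> //.
- apply: eq_terminating (terminating_upd termL (or_introl erefl)).
  by move=> y; rewrite issue_lnk.
- move=> y; rewrite issue_lnk; have [->|yv] := eqVneq y v; first by rewrite upd_at eqxx.
  by rewrite upd_ne //; apply: link_adj.
- move=> r w u ts; rewrite issue_transit.
  by case: ifP => [/andP[_ Lv] [<- <- _]|_]; [apply: link_adj | apply: transit_adj].
- move=> r /norP[nr ra]; have [trr pqr npr nlr] := unissued r nr; split.
  + by rewrite issue_transit (negbTE ra).
  + by rewrite issue_predq (negbTE ra).
  + by move=> z; rewrite issue_predq; case: ifP => [_ [/nlr]|_] //; apply: npr.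
  + move=> y; rewrite issue_lastreq; have [->|yv] := eqVneq y v; last by rewrite upd_ne.
    by rewrite upd_at => ar; rewrite ar eqxx in ra.
- move=> z; rewrite issue_lnk issue_lastreq; have [->|zv] := eqVneq z v; first by rewrite !upd_at.
  by rewrite !upd_ne //; apply: sink_last.
Qed.

End Issue.

Section Deliver.
Hypotheses (adj_sym : symmetric adj) (adj_irr : irreflexive adj).
Variables (s : state) (g : V -> I) (issued : pred I) (t : R) (a : I) (w u : V) (ts : R).
Hypotheses (invs : arrow_inv s g issued) (ha : transit s a = Some (w, u, ts)).
Local Notation L := (lnk s).
Local Notation s' := (step rv t s (Deliver a)).

Lemma deliver_lnk : lnk s' = upd L u w.
Proof. by rewrite /step ha; case: ifP. Qed.

Lemma deliver_lastreq : lastreq s' = lastreq s.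
Proof. by rewrite /step ha; case: ifP. Qed.

Lemma deliver_transit r : transit s' r =
  if r == a then (if L u == u then None else Some (u, L u, t)) else transit s r.
Proof. by rewrite /step ha /upd; case: ifP => _ //=; case: eqP. Qed.

Lemma deliver_predq r :
  predq s' r = if (r == a) && (L u == u) then Some (lastreq s u) else predq s r.
Proof. by rewrite /step ha /upd; case: ifP => _ /=; rewrite ?andbF ?andbT. Qed.

Lemma deliver_not_back : ~~ fconnect L w u.
Proof.
have termL := inv_terminating invs.
apply/negP => wu.
apply: (acyclic_succ_not_queued (inv_acyclic invs) (x := queue_tail s u) (y := a)).
  by rewrite /queue_succ ha.
by rewrite /queue_tail -(sink_fconnect termL wu); apply: inv_transit_queued invs _ _ _ _ ha.
Qed.

Lemma deliver_tail y :
  queue_tail s' y = if fconnect L y u then queue_tail s w else queue_tail s y.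
Proof.
rewrite /queue_tail deliver_lastreq deliver_lnk; case: ifP => yu.
  by rewrite (sink_upd_in (inv_terminating invs)) ?deliver_not_back.
by rewrite sink_upd_out ?yu.
Qed.

Lemma deliver_succ z : queue_succ s' z =
  if z == a then Some (queue_tail s u)
  else if heads_to s u z then Some (queue_tail s w) else queue_succ s z.
Proof.
have termL := inv_terminating invs.
rewrite /queue_succ deliver_transit deliver_predq /heads_to.
have [->|za] := eqVneq z a; last first.
  by case: (transit s z) => [[[w' x] ts']|] //=; rewrite deliver_tail; case: ifP.
rewrite /=; case: eqP => [Lu|/eqP Lu] /=; first by rewrite /queue_tail (sink_id Lu).
rewrite deliver_tail ifN; last exact: fconnect_succ_no_return.
by rewrite /queue_tail (sink_fconnect termL (fconnect1 _ u)).
Qed.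

Lemma deliver_queue :
  [/\ chain_acyclic (queue_succ s'),
      forall x y, queued_after (queue_succ s) x y -> queued_after (queue_succ s') x y
    & queued_after (queue_succ s') (queue_tail s w) a].
Proof.
apply: (acyclic_redirect (r := a) (t1 := queue_tail s u) (t := queue_tail s w)
          (inv_acyclic invs) (M := [pred z | (z != a) && heads_to s u z])).
- by rewrite /queue_succ ha.
- by rewrite deliver_succ eqxx.
- exact: inv_transit_queued invs _ _ _ _ ha.
- move=> z /andP[za hz]; rewrite deliver_succ (negbTE za) hz; split=> //.
  exact: heads_to_succ (inv_terminating invs) hz.
- move=> z za; rewrite /= za /= => /negbTE hz.
  by rewrite deliver_succ (negbTE za) hz.
Qed.

Lemma deliver_step_ok : step_ok s g s' (last_visitor_step s g (Deliver a)) issued.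
Proof.
have [termL link_adj transit_adj unissued sink_last queued visitors _] := invs.
have [acyc' mono wa] := deliver_queue.
have succ_a : queue_succ s' a = Some (queue_tail s u) by rewrite deliver_succ eqxx.
have tails y : queued_after (queue_succ s') (queue_tail s' y) (queue_tail s y).
  rewrite deliver_tail; case: ifP => yu; last exact: queued_after_refl.
  apply: queued_after_trans wa (queued_after1 _).
  by rewrite succ_a /queue_tail (sink_fconnect termL yu).
have transit' r w' u' ts' : transit s' r = Some (w', u', ts') ->
    r = a /\ w' = u \/ transit s r = Some (w', u', ts').
  rewrite deliver_transit; case: ifP => [/eqP -> |_]; last by right.
  by case: ifP => // _ [<- _ _]; left.
have tail_a : queued_after (queue_succ s') (queue_tail s' u) a.
  by rewrite deliver_tail connect0.
have [queued' visitors' visitors_mono] :=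
  queue_inv_step transit' queued visitors mono tails tail_a succ_a.
rewrite /last_visitor_step ha; split=> //; split=> //.
- by rewrite deliver_lnk; apply: (terminating_upd termL (or_intror deliver_not_back)).
- move=> y; rewrite deliver_lnk; have [->|yu] := eqVneq y u.
    by rewrite upd_at adj_sym => _; apply: transit_adj ha.
  by rewrite upd_ne //; apply: link_adj.
- move=> r w' u' ts'; rewrite deliver_transit; case: ifP => _; last exact: transit_adj.
  by case: ifP => // /negbT Lu [<- <- _]; apply: link_adj.
- move=> r nr; have [trr pqr npr nlr] := unissued r nr.
  have ra : r != a by apply/eqP => ra; move: trr; rewrite ra ha.
  split; [by rewrite deliver_transit (negbTE ra) | by rewrite deliver_predq (negbTE ra) | | ].
  + by move=> z; rewrite deliver_predq; case: ifP => [_ [/nlr]|_] //; apply: npr.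
  + by rewrite deliver_lastreq.
- move=> z; rewrite deliver_lnk deliver_lastreq; have [->|zu] := eqVneq z u; last first.
    by rewrite upd_ne //; apply: sink_last.
  by rewrite upd_at => wu; move: (transit_adj _ _ _ _ ha); rewrite wu adj_irr.
Qed.

End Deliver.
End ArrowStep.

Lemma init_links_fconnect (V : finType) (adj : rel V) v0 (link0 : V -> V) :
  is_tree adj -> init_links adj v0 link0 -> forall u, fconnect link0 u v0.
Proof.
move=> [_ _ _ path_uniq] [_ link0P].
suff walk n u p : size p <= n -> path adj u p -> last u p = v0 -> uniq (u :: p) ->
    fconnect link0 u v0.
  move=> u; have [->|uv0] := eqVneq u v0; first exact: connect0.
  have [adj_u [p [pp lp up]]] := link0P u uv0.
  by apply: (walk _ u (link0 u :: p)) => //=; rewrite adj_u.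
elim: n u p => [|n IHn] u p; first by case: p => //= _ _ ->.
have [->|uv0] := eqVneq u v0; first by rewrite connect0.
have [adj_u [p0 [pp0 lp0 up0]]] := link0P u uv0.
move=> size_p pu lpu upu; have ep : p = link0 u :: p0.
  by apply: (path_uniq u) => //=; rewrite ?adj_u ?lpu.
move: size_p upu; rewrite ep /= ltnS => size_p0 /andP[_ up0'].
exact: connect_trans (fconnect1 _ u) (IHn _ _ size_p0 pp0 lp0 up0').
Qed.

Lemma tree_path_subset (V : finType) (adj : rel V) x p q : is_tree adj ->
  path adj x p -> path adj x q -> uniq (x :: p) -> last x p = last x q ->
  {subset x :: p <= x :: q}.
Proof.
move=> [_ _ _ path_uniq] px qx ux; case: (shortenP qx) => q' q'x uq' sub_q' lpq'.
have -> : p = q' := path_uniq x p q' px q'x ux uq' lpq'.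
by move=> y; rewrite !in_cons => /orP[->//|/sub_q' ->]; rewrite orbT.
Qed.

Lemma visits_inj (V I : finType) (R : Type) (rv : I -> V) (link0 : V -> V) (d : I)
    (es : seq (R * event I)) a c u u' k :
  visits rv link0 d es a u k -> visits rv link0 d es c u' k -> a = c.
Proof.
by case=> _ + [_]; case: (ohead (drop k es)) => [[t [b|b]]|] //= [-> _] [-> _].
Qed.

Lemma run_ok_events (V I : eqType) (R : numDomainType) (d : I) (rv : I -> V)
    (rt : I -> R) (wt : V -> V -> R) (e0 : R * event I) es s t0 :
  run_ok d rv rt wt s t0 es ->
  (forall k, k < size es ->
     event_ok d rt wt (state_after rv s (take k es)) (nth e0 es k).1 (nth e0 es k).2) /\
  (forall a, transit (state_after rv s es) a = None).
Proof.
elim: es s t0 => [|[t e] es IHes] s t0 /=; first by split.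
by case=> _ ok /IHes[oks fin]; split=> // -[|k] //= lt_k; apply: oks.
Qed.

Section Execution.
Variables (R : numDomainType) (V : finType) (adj : rel V) (wt : V -> V -> R) (v0 : V)
  (I : finType) (d : I) (rv : I -> V) (rt : I -> R) (link0 : V -> V)
  (es : seq (R * event I)).
Hypotheses (tree : is_tree adj) (rv_d : rv d = v0) (init : init_links adj v0 link0)
  (exec : arrow_execution d rv rt wt link0 es).

Local Notation e0 := (0%R, Issue d).
Local Notation inv := (arrow_inv adj rv).

Definition state_at k := state_after rv (init_state R link0 d) (take k es).

Fixpoint last_visitor_at k : V -> I :=
  if k is k'.+1 then last_visitor_step rv (state_at k') (last_visitor_at k') (nth e0 es k').2
  else fun=> d.

Definition issued_at k r := (r == d) || has (fun te => is_issue_of r te.2) (take k es).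

Lemma state_at_succ k : k < size es ->
  state_at k.+1 = step rv (nth e0 es k).1 (state_at k) (nth e0 es k).2.
Proof. by move=> lt_k; rewrite /state_at (take_nth e0 lt_k) /state_after foldl_rcons. Qed.

Lemma state_at_end : state_at (size es) = state_after rv (init_state R link0 d) es.
Proof. by rewrite /state_at take_size. Qed.

Lemma event_ok_at k : k < size es ->
  event_ok d rt wt (state_at k) (nth e0 es k).1 (nth e0 es k).2.
Proof. by case: exec => /(run_ok_events e0)[oks _] _; apply: oks. Qed.

Lemma queue_succ_end : queue_succ (state_at (size es)) =1 predq (state_at (size es)).
Proof.
by move=> r; rewrite /queue_succ state_at_end; case: exec => /(run_ok_events e0)[_ ->].
Qed.

Lemma issued_at_succ k r : k < size es ->
  issued_at k.+1 r = issued_at k r || is_issue_of r (nth e0 es k).2.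
Proof.
move=> lt_k; rewrite /issued_at (take_nth e0 lt_k) has_rcons.
by case: (r == d); case: (is_issue_of _ _); case: (has _ _).
Qed.

Lemma issue_unissued_at k a : k < size es -> (nth e0 es k).2 = Issue a -> ~~ issued_at k a.
Proof.
move=> lt_k ek; have := event_ok_at lt_k; rewrite ek => -[ad _].
case: exec => _ /(_ a ad); rewrite -(cat_take_drop k es) count_cat (drop_nth e0 lt_k).
rewrite /= ek /= eqxx /issued_at (negbTE ad) has_count add1n addnS.
by case=> /eqP; rewrite addn_eq0 => /andP[/eqP-> _].
Qed.

Lemma init_inv : inv (state_at 0) (last_visitor_at 0) (issued_at 0).
Proof.
have [_ adj_irr _ _] := tree; have [l0 link0P] := init.
rewrite /state_at take0.
constructor=> //=.
- by move=> v; exists v0; [apply: (init_links_fconnect tree init) | rewrite l0].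
- move=> v; have [->|vv0] := eqVneq v v0; first by rewrite l0 eqxx.
  by have [] := link0P v vv0.
- by move=> r /norP[rd _]; split=> // v /eqP; rewrite eq_sym (negbTE rd).
- move=> z; have [->//|zv0] := eqVneq z v0.
  by have [] := link0P z zv0 => + _ lz; rewrite lz adj_irr.
- by move=> v; apply: queued_after_refl.
- by move=> x n; rewrite iterSr /= chain_None.
Qed.

Lemma step_ok_at k : k < size es -> inv (state_at k) (last_visitor_at k) (issued_at k) ->
  step_ok adj rv (state_at k) (last_visitor_at k)
    (state_at k.+1) (last_visitor_at k.+1) (issued_at k.+1).
Proof.
move=> lt_k invk; have [adj_sym adj_irr _ _] := tree.
have ok := event_ok_at lt_k; have fresh := @issue_unissued_at k ^~ lt_k.
have issued' := issued_at_succ _ lt_k.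
rewrite state_at_succ //=; case E: (nth e0 es k) => [t [a|a]] in ok fresh issued' *.
- have [inv' mono visitors] := issue_step_ok t invk (fresh a erefl).
  by split=> //; apply: arrow_inv_eq_issued inv' => r; rewrite issued' /= eq_sym.
- have [w [u [ts [ha _]]]] := ok.
  have [inv' mono visitors] := deliver_step_ok adj_sym adj_irr t invk ha.
  by split=> //; apply: arrow_inv_eq_issued inv' => r; rewrite issued' orbF.
Qed.

Lemma inv_at k : k <= size es -> inv (state_at k) (last_visitor_at k) (issued_at k).
Proof.
elim: k => [|k IHk] le_k; first exact: init_inv.
by have [] := step_ok_at le_k (IHk (ltnW le_k)).
Qed.

Lemma queued_after_at_mono k j x y : k <= j -> j <= size es ->
  queued_after (queue_succ (state_at k)) x y -> queued_after (queue_succ (state_at j)) x y.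
Proof.
elim: j => [|j IHj]; first by rewrite leqn0 => /eqP->.
rewrite leq_eqVlt => /orP[/eqP-> //|lt_kj] lt_j xy.
have [_ mono _] := step_ok_at lt_j (inv_at (ltnW lt_j)).
exact: mono (IHj lt_kj (ltnW lt_j) xy).
Qed.

Lemma visits_last_visitor x u k : visits rv link0 d es x u k -> last_visitor_at k.+1 u = x.
Proof.
case=> lt_k; rewrite (drop_nth e0 lt_k) /=.
case: (nth e0 es k) => t [b|b] /=; first by case=> -> <-; rewrite upd_at.
by case=> -> [w [ts tr]]; rewrite -/(state_at k) tr upd_at.
Qed.

Lemma last_visitor_queued_at x u k j : visits rv link0 d es x u k -> k < j -> j <= size es ->
  queued_after (queue_succ (state_at j)) (last_visitor_at j u) x.
Proof.
move=> visit_x; elim: j => [//|j IHj] lt_kj le_j.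
have [<-|kj] := eqVneq k j.
  by rewrite (visits_last_visitor visit_x); apply: queued_after_refl.
have [_ mono visitors] := step_ok_at le_j (inv_at (ltnW le_j)).
have lt_kj' : k < j by rewrite ltn_neqAle kj -ltnS.
exact: queued_after_trans (visitors u) (mono _ _ (IHj lt_kj' (ltnW le_j))).
Qed.

Lemma later_visit_queued x y u k1 k2 :
  visits rv link0 d es x u k1 -> visits rv link0 d es y u k2 -> k1 < k2 ->
  queued_after (queue_succ (state_at (size es))) y x.
Proof.
move=> visit_x visit_y lt_k12; have [lt_k2 _] := visit_y.
have [_ mono visitors] := step_ok_at lt_k2 (inv_at (ltnW lt_k2)).
apply: (queued_after_at_mono (k := k2.+1)) => //.
rewrite -(visits_last_visitor visit_y).
have := last_visitor_queued_at visit_x lt_k12 (ltnW lt_k2).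
by move/mono; apply: queued_after_trans (visitors u).
Qed.

Definition walked r q e := [/\ path adj (rv r) q, last (rv r) q = e &
  forall x, x \in rv r :: q -> exists k, visits rv link0 d es r x k].

Definition walks_at k :=
  (forall r w u ts, transit (state_at k) r = Some (w, u, ts) -> exists q, walked r q w) /\
  (forall r b, predq (state_at k) r = Some b -> exists q, walked r q (rv b)).

Lemma walked_issue k t a : k < size es -> nth e0 es k = (t, Issue a) ->
  walked a [::] (rv a).
Proof.
move=> lt_k ek; split=> // x; rewrite mem_seq1 => /eqP ->; exists k; split=> //.
by rewrite (drop_nth e0 lt_k) ek.
Qed.

Lemma walked_deliver k t a w u ts q : k < size es -> nth e0 es k = (t, Deliver a) ->
  transit (state_at k) a = Some (w, u, ts) -> adj w u -> walked a q w ->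
  walked a (rcons q u) u.
Proof.
move=> lt_k ek ta wu [pq lq visit_q]; split; [by rewrite rcons_path pq lq | exact: last_rcons |].
move=> x; rewrite -rcons_cons mem_rcons in_cons => /orP[/eqP ->|]; last exact: visit_q.
by exists k; split=> //; rewrite (drop_nth e0 lt_k) ek /=; split=> //; exists w, ts.
Qed.

Lemma walks_at_all k : k <= size es -> walks_at k.
Proof.
elim: k => [|k IHk] le_k; first by split=> [r w u ts|r b]; rewrite /state_at take0.
have [walk_tr walk_pq] := IHk (ltnW le_k); have invk := inv_at (ltnW le_k).
have := event_ok_at le_k; rewrite /walks_at state_at_succ //.
case E: (nth e0 es k) => [t [a|a]] /= => [_|[w [u [ts [ta _]]]]].
- split=> [r w u ts|r b].
    rewrite issue_transit; case: ifP => [/andP[/eqP-> _] [<- _ _]|_]; last exact: walk_tr.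
    by exists [::]; apply: walked_issue E.
  rewrite issue_predq; case: ifP => [/andP[/eqP-> /eqP Lv] [<-]|_]; last exact: walk_pq.
  by exists [::]; rewrite (inv_sink_lastreq invk Lv); apply: walked_issue E.
- have [q walk_q] := walk_tr _ _ _ _ ta.
  have walk_qu := walked_deliver le_k E ta (inv_transit_adj invk ta) walk_q.
  split=> [r w' u' ts'|r b].
    rewrite (deliver_transit _ _ ta); case: ifP => [/eqP-> |_]; last exact: walk_tr.
    by case: ifP => // _ [<- _ _]; exists (rcons q u).
  rewrite (deliver_predq _ _ ta); case: ifP => [/andP[/eqP-> /eqP Lu] [<-]|_]; last exact: walk_pq.
  by rewrite (inv_sink_lastreq invk Lu); exists (rcons q u).
Qed.

Lemma pred_end_walked a b : predq (state_after rv (init_state R link0 d) es) a = Some b ->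
  exists q, walked a q (rv b).
Proof. by rewrite -state_at_end; apply: (walks_at_all (leqnn _)).2. Qed.

Lemma visits_before_queued_after a c u k k' : c != a ->
  queued_after (predq (state_after rv (init_state R link0 d) es)) c a ->
  visits rv link0 d es a u k -> visits rv link0 d es c u k' -> k < k'.
Proof.
rewrite -state_at_end => ca ca_queued visit_a visit_c; rewrite ltnNge leq_eqVlt.
apply/negP => /orP[/eqP ek|lt_k'k].
  by move: visit_c; rewrite ek => /(visits_inj visit_a) ac; rewrite ac eqxx in ca.
have ac_queued := later_visit_queued visit_c visit_a lt_k'k.
have ca_queued' : queued_after (queue_succ (state_at (size es))) c a.
  by apply: queued_after_sub ca_queued => z t zt; apply: queued_after1; rewrite queue_succ_end.
have acyc := inv_acyclic (inv_at (leqnn _)).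
by move: ca; rewrite (acyclic_antisym acyc ca_queued' ac_queued) eqxx.
Qed.

End Execution.

Local Open Scope ring_scope.

Theorem lemma12 (R : realFieldType) (V : finType) (adj : rel V) (wt : V -> V -> R)
    (v0 : V) (I : finType) (d : I) (rv : I -> V) (rt : I -> R) (link0 : V -> V)
    (es : seq (R * event I)) :
  is_tree adj ->
  (forall x y, adj x y -> 0 < wt x y /\ wt x y = wt y x) ->
  rv d = v0 -> rt d = 0 ->
  init_links adj v0 link0 ->
  arrow_execution d rv rt wt link0 es ->
  forall a b : I,
    predq (state_after rv (init_state R link0 d) es) a = Some b ->
    forall p : seq V, path adj (rv a) p -> last (rv a) p = rv b -> uniq (rv a :: p) ->
    forall u, u \in rv a :: p ->
      exists2 k, visits rv link0 d es a u k &
        forall c k', c != a ->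
          queued_after (predq (state_after rv (init_state R link0 d) es)) c a ->
          visits rv link0 d es c u k' -> (k < k')%N.
Proof.
move=> tree _ rv_d _ init exec a b pab p pa lp up u pu.
have [q [qa lq visit_q]] := pred_end_walked tree rv_d init exec pab.
have [k visit_k] : exists k, visits rv link0 d es a u k.
  by apply: visit_q; apply: (tree_path_subset tree pa qa up) => //; rewrite lp lq.
exists k => // c k' ca ca_queued.
exact: (visits_before_queued_after tree rv_d init exec ca ca_queued visit_k).
Qed.
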